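(* Let $\eta\in(0,1)$ and let $\mathbf{u}\in\mathbb{R}^{d_x}$, $\mathbf{v}\in\mathbb{R}^{d_y}$ be nonzero. If $\mathrm{align}((\mathbf{u},\mathbf{v});(\mathbf{u}^*,\mathbf{v}^* ))\ge1-\frac\eta8$, then $\frac{\mathbf{u}^\top\Sigma_{xy}\mathbf{v}}{\sqrt{\mathbf{u}^\top\Sigma_{xx}\mathbf{u}}\sqrt{\mathbf{v}^\top\Sigma_{yy}\mathbf{v}}}\ge\rho_1(1-\eta)$.
   Context: $\mathbf{x}\in\mathbb{R}^{d_x}$, $\mathbf{y}\in\mathbb{R}^{d_y}$ are zero-mean random vectors with $\Sigma_{xx}=\mathbb{E}\mathbf{x}\mathbf{x}^\top$, $\Sigma_{yy}=\mathbb{E}\mathbf{y}\mathbf{y}^\top$ positive definite and $\Sigma_{xy}=\mathbb{E}\mathbf{x}\mathbf{y}^\top$. $\mathbf{T}=\Sigma_{xx}^{-1/2}\Sigma_{xy}\Sigma_{yy}^{-1/2}$ has largest singular value $\rho_1$ with unit top left/right singular vectors $(\mathbf{a}_1,\mathbf{b}_1)$ (assumed unique up to a common sign, i.e. $\rho_1>\rho_2$), and $(\mathbf{u}^*,\mathbf{v}^* )=(\Sigma_{xx}^{-1/2}\mathbf{a}_1,\Sigma_{yy}^{-1/2}\mathbf{b}_1)$. For nonzero $\mathbf{u},\mathbf{v}$, $\mathrm{align}((\mathbf{u},\mathbf{v});(\mathbf{u}^*,\mathbf{v}^* )):=\frac12\big(\frac{\mathbf{u}^\top\Sigma_{xx}\mathbf{u}^*}{\|\Sigma_{xx}^{1/2}\mathbf{u}\|}+\frac{\mathbf{v}^\top\Sigma_{yy}\mathbf{v}^*}{\|\Sigma_{yy}^{1/2}\mathbf{v}\|}\big)$.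 *)

From HB Require Import structures.
From mathcomp Require Import all_boot all_order all_algebra.
From mathcomp Require Import reals.
Set Implicit Arguments. Unset Strict Implicit. Unset Printing Implicit Defensive.
Import Order.TTheory GRing.Theory Num.Theory.
Local Open Scope ring_scope.

Definition bil {R : realType} {m n : nat} (u : 'cV[R]_m) (A : 'M[R]_(m, n))
  (v : 'cV[R]_n) : R := (u^T *m A *m v) 0 0.

Definition vnorm {R : realType} {m : nat} (w : 'cV[R]_m) : R :=
  Num.sqrt ((w^T *m w) 0 0).

Definition symmetric {R : realType} {n : nat} (A : 'M[R]_n) : Prop := A^T = A.

Definition posdef {R : realType} {n : nat} (A : 'M[R]_n) : Prop :=
  symmetric A /\ forall w : 'cV[R]_n, w != 0 -> 0 < bil w A w.

Definition possemidef {R : realType} {n : nat} (A : 'M[R]_n) : Prop :=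
  symmetric A /\ forall w : 'cV[R]_n, 0 <= bil w A w.

Definition is_psd_sqrt {R : realType} {n : nat} (A S : 'M[R]_n) : Prop :=
  posdef S /\ S *m S = A.

Definition singular_triple {R : realType} {m n : nat} (T : 'M[R]_(m, n))
  (s : R) (a : 'cV[R]_m) (b : 'cV[R]_n) : Prop :=
  0 <= s /\ vnorm a = 1 /\ vnorm b = 1 /\ T *m b = s *: a /\ T^T *m a = s *: b.

Definition singular_value {R : realType} {m n : nat} (T : 'M[R]_(m, n)) (s : R) : Prop :=
  exists a b, singular_triple T s a b.

Definition top_singular_unique {R : realType} {m n : nat} (T : 'M[R]_(m, n))
  (rho : R) (a : 'cV[R]_m) (b : 'cV[R]_n) : Prop :=
  singular_triple T rho a b /\
  (forall s, singular_value T s -> s <= rho) /\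
  (forall a' b', singular_triple T rho a' b' ->
     (a' = a /\ b' = b) \/ (a' = - a /\ b' = - b)).

(* align((u,v);(us,vs)) ; Sx = Sigma_xx^{1/2}, Sy = Sigma_yy^{1/2} *)
Definition align {R : realType} {dx dy : nat}
  (Sxx Sx : 'M[R]_dx) (Syy Sy : 'M[R]_dy)
  (u us : 'cV[R]_dx) (v vs : 'cV[R]_dy) : R :=
  2^-1 * (bil u Sxx us / vnorm (Sx *m u) + bil v Syy vs / vnorm (Sy *m v)).

From HB Require Import structures.
From mathcomp Require Import all_boot all_order all_algebra.
From mathcomp Require Import boolp classical_sets reals topology normedtype derive.
From mathcomp Require Import lra ring.
Set Implicit Arguments. Unset Strict Implicit. Unset Printing Implicit Defensive.
Import Order.TTheory GRing.Theory Num.Theory numFieldNormedType.Exports.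
Local Open Scope classical_set_scope.
Local Open Scope ring_scope.

(* Whitening by [P := Sx u], [Q := Sy v] and [T := Sx^-1 Sxy Sy^-1] turns the
   quotient into [<p, T q>] for the unit vectors [p := P/|P|], [q := Q/|Q|],
   and the alignment into [(al + be)/2] with [al := <p, a1>], [be := <q, b1>].
   Splitting [p = al a1 + x], [q = be b1 + y] with [x ⊥ a1], [y ⊥ b1] gives
   [<p, T q> = al be rho1 + <x, T y>], and since [|T| <= rho1] the cross term is
   at least [- rho1 (|x|^2 + |y|^2) / 2]; hence [2 <p, T q> >= rho1 ((al + be)^2 - 2)].
   The bound [|T| <= rho1] holds because a maximiser of the Rayleigh quotient of
   [T^T T] on the compact unit sphere is an eigenvector, hence yields a singular
   value of [T]. *)

Section RealVectors.
Variable R : realType.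

Definition dotmx n (x y : 'cV[R]_n) : R := (x^T *m y) 0 0.

Lemma dotmxE n (x y : 'cV[R]_n) : dotmx x y = \sum_i x i 0 * y i 0.
Proof. by rewrite /dotmx mxE; apply: eq_bigr => i _; rewrite mxE. Qed.

Lemma dotmxC n (x y : 'cV[R]_n) : dotmx x y = dotmx y x.
Proof. by rewrite !dotmxE; apply: eq_bigr => i _; rewrite mulrC. Qed.

Lemma dotmxDl n (x y z : 'cV[R]_n) : dotmx (x + y) z = dotmx x z + dotmx y z.
Proof. by rewrite /dotmx linearD mulmxDl mxE. Qed.

Lemma dotmxZl n a (x y : 'cV[R]_n) : dotmx (a *: x) y = a * dotmx x y.
Proof. by rewrite /dotmx linearZ -scalemxAl mxE. Qed.

Lemma dotmxBl n (x y z : 'cV[R]_n) : dotmx (x - y) z = dotmx x z - dotmx y z.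
Proof. by rewrite dotmxDl -scaleN1r dotmxZl mulN1r. Qed.

Lemma dotmxDr n (x y z : 'cV[R]_n) : dotmx z (x + y) = dotmx z x + dotmx z y.
Proof. by rewrite dotmxC dotmxDl !(dotmxC z). Qed.

Lemma dotmxZr n a (x y : 'cV[R]_n) : dotmx y (a *: x) = a * dotmx y x.
Proof. by rewrite dotmxC dotmxZl dotmxC. Qed.

Lemma dotmxBr n (x y z : 'cV[R]_n) : dotmx z (x - y) = dotmx z x - dotmx z y.
Proof. by rewrite dotmxC dotmxBl !(dotmxC z). Qed.

Lemma dotmx0r n (x : 'cV[R]_n) : dotmx x 0 = 0.
Proof. by rewrite /dotmx mulmx0 mxE. Qed.

Lemma dotmx_mulmx m n (A : 'M[R]_(m, n)) x y : dotmx x (A *m y) = dotmx (A^T *m x) y.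
Proof. by rewrite /dotmx trmx_mul trmxK mulmxA. Qed.

Lemma dotmx_ge0 n (x : 'cV[R]_n) : 0 <= dotmx x x.
Proof. by rewrite dotmxE; apply: sumr_ge0 => i _; rewrite -expr2 sqr_ge0. Qed.

Lemma dotmx_eq0 n (x : 'cV[R]_n) : (dotmx x x == 0) = (x == 0).
Proof.
apply/idP/eqP => [|->]; last by rewrite dotmx0r.
rewrite dotmxE psumr_eq0 => [/allP x0|i _]; last by rewrite -expr2 sqr_ge0.
apply/matrixP => i j; rewrite (ord1 j) mxE.
by have /x0 := mem_index_enum i; rewrite /= mulf_eq0 orbb => /eqP.
Qed.

Lemma dotmx_gt0 n (x : 'cV[R]_n) : (0 < dotmx x x) = (x != 0).
Proof. by rewrite lt_def dotmx_eq0 dotmx_ge0 andbT. Qed.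

Lemma bilE m n (u : 'cV[R]_m) (A : 'M[R]_(m, n)) v : bil u A v = dotmx u (A *m v).
Proof. by rewrite /bil /dotmx mulmxA. Qed.

Lemma vnormE n (w : 'cV[R]_n) : vnorm w = Num.sqrt (dotmx w w).
Proof. by []. Qed.

Lemma vnorm_eq1 n (w : 'cV[R]_n) : vnorm w = 1 <-> dotmx w w = 1.
Proof.
rewrite vnormE; split=> [w1|->]; last exact: sqrtr1.
by rewrite -[LHS]sqr_sqrtr ?dotmx_ge0 // w1 expr1n.
Qed.

Lemma quadratic_le0_eq0 (b c : R) :
  c <= 0 -> (forall t, 2 * t * b + t ^+ 2 * c <= 0) -> b = 0.
Proof.
move=> c_le0 le0; have c1_gt0 : 0 < 1 - c by lra.
pose t := b / (1 - c); have bE : b = t * (1 - c) by rewrite divfK ?gt_eqF.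
have : t ^+ 2 == 0 by rewrite eq_le sqr_ge0 andbT; have := le0 t; rewrite {1}bE; nra.
by rewrite expf_eq0 /= bE => /eqP ->; rewrite mul0r.
Qed.

Lemma rayleigh_max n (M : 'M[R]_n.+1) :
  exists2 c : 'cV[R]_n.+1, dotmx c c = 1 &
    forall y, dotmx y y = 1 -> dotmx y (M *m y) <= dotmx c (M *m c).
Proof.
pose q (N : 'M[R]_n.+1) (r : 'rV[R]_n.+1) := dotmx r^T (N *m r^T).
have q_cont N : continuous (q N).
  have -> : q N = fun r => \sum_i \sum_j r 0 i * N i j * r 0 j.
    apply/funext => r; rewrite /q dotmxE; apply: eq_bigr => i _.
    by rewrite !mxE mulr_sumr; apply: eq_bigr => j _; rewrite !mxE mulrA.
  apply: (continuous_big (P := xpredT) add_continuous) => i _.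
  apply: (continuous_big (P := xpredT) add_continuous) => j _ r.
  have coord_cont k := @coord_continuous R 1 n.+1 0 k r.
  exact: continuousM (continuousM (coord_cont i) (@cst_continuous _ _ (N i j) r))
    (coord_cont j).
have sq_le i (y : 'cV[R]_n.+1) : y i 0 ^+ 2 <= dotmx y y.
  rewrite dotmxE (bigD1 i) //= expr2 lerDl.
  by apply: sumr_ge0 => j _; rewrite -expr2 sqr_ge0.
pose A := [set r : 'rV[R]_n.+1 | forall i, `[-1, 1]%classic (r 0 i)] `&` q 1 @^-1` [set 1].
have A_compact : compact A.
  apply: compact_closedI.
    by apply: (@rV_compact _ _ (fun=> `[-1 : R, 1]%classic)) => i; exact: segment_compact.
  by apply: preimage_closed; [move=> r _; exact: q_cont | exact: closed_eq].
have unit_in_A (y : 'cV[R]_n.+1) : dotmx y y = 1 -> y^T \in A.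
  move=> y1; rewrite inE; split=> [i|]; last by rewrite /preimage /q /= trmxK mul1mx.
  by rewrite /= mxE in_itv /=; have := sq_le i y; rewrite y1 => ?; apply/andP; split; nra.
have A_neq0 : A !=set0.
  exists (delta_mx 0 0 : 'cV_n.+1)^T; apply/set_mem/unit_in_A.
  by rewrite /dotmx trmx_delta mul_delta_mx mxE.
have [c + c_max] := EVT_max_rV A_neq0 A_compact
  (continuous_subspaceT (q_cont M)).
rewrite inE => -[_]; rewrite /preimage /q /= mul1mx => c1.
by exists c^T => // y /unit_in_A /c_max; rewrite /q trmxK.
Qed.

Lemma rayleigh_le n (M : 'M[R]_n) c : dotmx c c = 1 ->
    (forall y, dotmx y y = 1 -> dotmx y (M *m y) <= dotmx c (M *m c)) ->
  forall y, dotmx y (M *m y) <= dotmx c (M *m c) * dotmx y y.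
Proof.
move=> c1 c_max y; have [->|y_neq0] := eqVneq y 0; first by rewrite mulmx0 !dotmx0r mulr0.
have yy_gt0 : 0 < dotmx y y by rewrite dotmx_gt0.
pose k := (Num.sqrt (dotmx y y))^-1.
have k2 : k ^+ 2 * dotmx y y = 1 by rewrite exprVn (sqr_sqrtr (dotmx_ge0 y)) mulVf ?gt_eqF.
have := c_max (k *: y); rewrite -scalemxAr !dotmxZl !dotmxZr !mulrA -!expr2 => /(_ k2).
move=> le_c; rewrite -[dotmx y _]mul1r -k2 mulrAC.
by rewrite ler_wpM2r ?dotmx_ge0.
Qed.

(* Along [c + t w] with [w := M c - lam c], the form [<y, M y> - lam <y, y>]
   equals [2 t <w, w> + t^2 (...)]; it stays [<= 0] for all [t] only if [w = 0]. *)
Lemma rayleigh_max_eigen n (M : 'M[R]_n) lam c : M^T = M ->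
    dotmx c (M *m c) = lam * dotmx c c ->
    (forall y, dotmx y (M *m y) <= lam * dotmx y y) ->
  M *m c = lam *: c.
Proof.
move=> M_sym c_eq M_le; set w := M *m c - lam *: c.
have wMc : dotmx w (M *m c) - lam * dotmx w c = dotmx w w by rewrite [in RHS]dotmxBr dotmxZr.
have Mcw : dotmx c (M *m w) = dotmx w (M *m c) by rewrite dotmx_mulmx M_sym dotmxC.
have wE : w = M *m c - lam *: c by [].
clearbody w; have /eqP : dotmx w w = 0.
  apply: (@quadratic_le0_eq0 _ (dotmx w (M *m w) - lam * dotmx w w)); first by rewrite subr_le0.
  move=> t; have := M_le (c + t *: w); rewrite -subr_le0 mulmxDr -scalemxAr.
  rewrite !dotmxDl !dotmxDr !dotmxZl !dotmxZr Mcw (dotmxC c w) c_eq -wMc.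
  by apply: le_trans; rewrite le_eqVlt; apply/orP; left; apply/eqP; ring.
by rewrite dotmx_eq0 wE subr_eq0 => /eqP.
Qed.

Lemma gram_eigen_singular_triple m n (T : 'M[R]_(m, n)) lam c :
    0 < lam -> dotmx c c = 1 -> T^T *m T *m c = lam *: c ->
  singular_triple T (Num.sqrt lam) ((Num.sqrt lam)^-1 *: (T *m c)) c.
Proof.
move=> lam_gt0 c1 Tc; set s := Num.sqrt lam.
have s_gt0 : 0 < s by rewrite sqrtr_gt0.
have s2 : s ^+ 2 = lam by rewrite (sqr_sqrtr (ltW lam_gt0)).
split; first exact: ltW.
split; first rewrite vnorm_eq1 dotmxZl dotmxZr mulrA -expr2 dotmx_mulmx mulmxA Tc.
  by rewrite dotmxZl c1 mulr1 exprVn s2 mulVf ?gt_eqF.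
split; first exact/vnorm_eq1.
split; first by rewrite scalerA mulfV ?gt_eqF ?scale1r.
by rewrite -scalemxAr mulmxA Tc scalerA -s2 expr2 mulKf ?gt_eqF.
Qed.

Lemma top_singular_value_opnorm m n (T : 'M[R]_(m, n)) rho :
    (forall s, singular_value T s -> s <= rho) ->
  forall y, dotmx (T *m y) (T *m y) <= rho ^+ 2 * dotmx y y.
Proof.
case: n T => [|n] T rho_max y; first by rewrite flatmx0 mulmx0 !dotmx0r mulr0.
pose M := T^T *m T; have MyTy z : dotmx z (M *m z) = dotmx (T *m z) (T *m z).
  by rewrite /M -mulmxA dotmx_mulmx trmxK.
have [c c1 c_max] := rayleigh_max M; set lam := dotmx c (M *m c).
have M_le := rayleigh_le c1 c_max.
have Mc : M *m c = lam *: c.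
  by apply: rayleigh_max_eigen; rewrite ?c1 ?mulr1 // trmx_mul trmxK.
have lam_le : lam <= rho ^+ 2.
  have : 0 <= lam by rewrite /lam MyTy dotmx_ge0.
  rewrite le_eqVlt => /predU1P [<-|lam_gt0]; first exact: sqr_ge0.
  have /rho_max s_le : singular_value T (Num.sqrt lam).
    by exists ((Num.sqrt lam)^-1 *: (T *m c)), c; apply: gram_eigen_singular_triple.
  by rewrite -(sqr_sqrtr (ltW lam_gt0)); have := sqrtr_ge0 lam; nra.
rewrite -MyTy; apply: le_trans (M_le y) _; exact/ler_wpM2r/lam_le/dotmx_ge0.
Qed.

Lemma dotmx_lbound m n (x z : 'cV[R]_m) (y : 'cV[R]_n) rho : 0 <= rho ->
  dotmx z z <= rho ^+ 2 * dotmx y y -> - rho * (dotmx x x + dotmx y y) <= 2 * dotmx x z.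
Proof.
rewrite le_eqVlt => /predU1P[<- zz_le|rho_gt0 zz_le].
  suff /eqP -> : z == 0 by rewrite dotmx0r mulr0 oppr0 mul0r.
  by rewrite -dotmx_eq0 eq_le dotmx_ge0 andbT; rewrite expr0n mul0r in zz_le.
have := dotmx_ge0 (rho *: x + z).
rewrite dotmxDl !dotmxDr !dotmxZl !dotmxZr (dotmxC z x); nra.
Qed.

Lemma top_singular_pairing_ge m n (T : 'M[R]_(m, n)) rho a b p q :
    singular_triple T rho a b ->
    (forall y, dotmx (T *m y) (T *m y) <= rho ^+ 2 * dotmx y y) ->
    dotmx p p = 1 -> dotmx q q = 1 ->
  rho * ((dotmx p a + dotmx q b) ^+ 2 - 2) <= 2 * dotmx p (T *m q).
Proof.
case=> rho_ge0 [/vnorm_eq1 a1 [/vnorm_eq1 b1 [Tb Ta]]] T_le p1 q1.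
set al := dotmx p a; set be := dotmx q b.
set x := p - al *: a; set y := q - be *: b.
have pE : p = al *: a + x by rewrite addrC subrK.
have qE : q = be *: b + y by rewrite addrC subrK.
have ax0 : dotmx a x = 0 by rewrite dotmxBr dotmxZr a1 mulr1 dotmxC subrr.
have by0 : dotmx b y = 0 by rewrite dotmxBr dotmxZr b1 mulr1 dotmxC subrr.
clearbody x y.
have xx : dotmx x x = 1 - al ^+ 2.
  by rewrite -p1 pE !dotmxDl !dotmxDr !dotmxZl !dotmxZr a1 (dotmxC x a) ax0; ring.
have yy : dotmx y y = 1 - be ^+ 2.
  by rewrite -q1 qE !dotmxDl !dotmxDr !dotmxZl !dotmxZr b1 (dotmxC y b) by0; ring.
have pTq : dotmx p (T *m q) = al * be * rho + dotmx x (T *m y).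
  rewrite {1}qE mulmxDr -scalemxAr Tb dotmxDr !dotmxZr -/al.
  by rewrite pE dotmxDl dotmxZl dotmx_mulmx Ta dotmxZl by0; ring.
have := dotmx_lbound x rho_ge0 (T_le y); rewrite pTq xx yy; nra.
Qed.

Lemma dotmx_normalize n (x : 'cV[R]_n) : x != 0 ->
  dotmx ((vnorm x)^-1 *: x) ((vnorm x)^-1 *: x) = 1.
Proof.
rewrite -dotmx_gt0 => xx_gt0.
by rewrite dotmxZl dotmxZr mulrA -expr2 exprVn vnormE (sqr_sqrtr (dotmx_ge0 x)) mulVf ?gt_eqF.
Qed.

Lemma top_singular_cosine_ge m n (T : 'M[R]_(m, n)) rho a b (P : 'cV_m) (Q : 'cV_n) :
    singular_triple T rho a b -> (forall s, singular_value T s -> s <= rho) ->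
    P != 0 -> Q != 0 ->
  rho * ((dotmx P a / vnorm P + dotmx Q b / vnorm Q) ^+ 2 - 2)
    <= 2 * (dotmx P (T *m Q) / (vnorm P * vnorm Q)).
Proof.
move=> top rho_max P0 Q0.
have := top_singular_pairing_ge top (top_singular_value_opnorm rho_max)
  (dotmx_normalize P0) (dotmx_normalize Q0).
rewrite !dotmxZl -scalemxAr dotmxZr.
by rewrite ![dotmx _ _ / _]mulrC invfM -mulrA.
Qed.

Lemma posdef_unitmx n (S : 'M[R]_n) : posdef S -> S \in unitmx.
Proof.
move=> [S_sym S_pos]; rewrite -row_free_unit -kermx_eq0.
apply/negPn/negP => /rowV0Pn [v /sub_kermxP vS v_neq0].
have := S_pos v^T; rewrite trmx_eq0 bilE => /(_ v_neq0).
by rewrite -[S]S_sym -trmx_mul vS trmx0 dotmx0r ltxx.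
Qed.

Lemma bil_sqrtmx n (A S : 'M[R]_n) u w : S^T = S -> S *m S = A ->
  bil u A w = dotmx (S *m u) (S *m w).
Proof. by move=> S_sym <-; rewrite bilE -mulmxA dotmx_mulmx S_sym. Qed.

Lemma bil_whiten m n (Sx : 'M[R]_m) (Sy : 'M[R]_n) (Sxy : 'M[R]_(m, n)) u v :
    Sx^T = Sx -> Sx \in unitmx -> Sy \in unitmx ->
  bil u Sxy v = dotmx (Sx *m u) (invmx Sx *m Sxy *m invmx Sy *m (Sy *m v)).
Proof.
move=> Sx_sym Sx_unit Sy_unit.
by rewrite mulmxA mulmxKV // -mulmxA dotmx_mulmx trmx_inv Sx_sym mulKmx // bilE.
Qed.

End RealVectors.

Theorem lemma1 (R : realType) (dx dy : nat)
  (Sxx : 'M[R]_dx) (Syy : 'M[R]_dy) (Sxy : 'M[R]_(dx, dy))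
  (Sx : 'M[R]_dx) (Sy : 'M[R]_dy)
  (rho1 : R) (a1 : 'cV[R]_dx) (b1 : 'cV[R]_dy)
  (eta : R) (u : 'cV[R]_dx) (v : 'cV[R]_dy) :
  posdef Sxx -> posdef Syy ->
  possemidef (block_mx Sxx Sxy Sxy^T Syy) ->
  is_psd_sqrt Sxx Sx -> is_psd_sqrt Syy Sy ->
  top_singular_unique (invmx Sx *m Sxy *m invmx Sy) rho1 a1 b1 ->
  0 < eta < 1 -> u != 0 -> v != 0 ->
  align Sxx Sx Syy Sy u (invmx Sx *m a1) v (invmx Sy *m b1) >= 1 - eta / 8 ->
  bil u Sxy v / (Num.sqrt (bil u Sxx u) * Num.sqrt (bil v Syy v))
    >= rho1 * (1 - eta).
Proof.
move=> _ _ _ [Sx_pd SxSx] [Sy_pd SySy] [top [rho_max _]] /andP[eta_gt0 eta_lt1] u0 v0.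
have [Sx_sym Sy_sym] : Sx^T = Sx /\ Sy^T = Sy by case: Sx_pd; case: Sy_pd.
have [Sx_unit Sy_unit] := (posdef_unitmx Sx_pd, posdef_unitmx Sy_pd).
have P0 : Sx *m u != 0 by apply: contraNneq u0 => P0; rewrite -(mulKmx Sx_unit u) P0 mulmx0.
have Q0 : Sy *m v != 0 by apply: contraNneq v0 => Q0; rewrite -(mulKmx Sy_unit v) Q0 mulmx0.
rewrite /align (bil_whiten _ _ _ Sx_sym Sx_unit Sy_unit) !(bil_sqrtmx _ _ Sx_sym SxSx).
rewrite !(bil_sqrtmx _ _ Sy_sym SySy) !mulKVmx // -!vnormE => align_ge.
have := top_singular_cosine_ge top rho_max P0 Q0.
set s := dotmx _ a1 / _ + _ in align_ge *; set c := _ / (_ * _); move=> cos_ge.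
have rho_ge0 : 0 <= rho1 by case: top.
have s_ge : 2 - eta / 4 <= s by lra.
have s2_ge : 4 - 2 * eta <= s ^+ 2 by nra.
have := ler_wpM2l rho_ge0 s2_ge; lra.
Qed.
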